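(* Let $\mathcal{R}$ be a fusion ring with basis $\{x_1=1,\ldots,x_m\}$ and fusion matrices $M_j$. Then the primary $2$-matrix is positive semidefinite: \[ \sum_{j=1}^m M_j\otimes M_j\geq0. \]
   Context: A fusion ring is a ring $\mathcal{R}$ which is a free $\mathbb{Z}$-module with a finite basis $\{x_1=1,\ldots,x_m\}$ such that $x_ix_j=\sum_k N_{ij}^k x_k$ with $N_{ij}^k\in\mathbb{N}$; there is an involution $i\mapsto i^*$ whose $\mathbb{Z}$-linear extension is an anti-involution of $\mathcal{R}$; and the coefficient of $x_1$ in $x_ix_j$ equals $\delta_{i,j^*}$. The fusion matrix of $x_j$ is $(M_j)_{k,i}=N_{ji}^k$; $\otimes$ is the Kronecker product. *)

From HB Require Import structures.
From mathcomp Require Import all_boot all_order all_algebra all_field.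
From mathcomp Require Import mxtens.
Set Implicit Arguments. Unset Strict Implicit. Unset Printing Implicit Defensive.
Import Order.TTheory GRing.Theory Num.Theory.
Local Open Scope ring_scope.

(* A fusion ring of rank m.+1 with basis x_0 = 1, x_1, ..., x_m (0-indexed),
   given by its structure constants N i j k = N_{ij}^k (coefficient of x_k in
   x_i x_j) and the involution star. *)
Record fusion_ring (m : nat) := FusionRing {
  fr_N : 'I_m.+1 -> 'I_m.+1 -> 'I_m.+1 -> nat;
  fr_star : 'I_m.+1 -> 'I_m.+1;
  fr_assoc : forall i j l p : 'I_m.+1,
    (\sum_(k < m.+1) fr_N i j k * fr_N k l p =
     \sum_(k < m.+1) fr_N j l k * fr_N i k p)%N;
  fr_unitl : forall j k : 'I_m.+1, fr_N ord0 j k = (j == k) :> nat;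
  fr_unitr : forall j k : 'I_m.+1, fr_N j ord0 k = (j == k) :> nat;
  fr_star_invol : forall i, fr_star (fr_star i) = i;
  fr_star_anti : forall i j k : 'I_m.+1,
    fr_N i j k = fr_N (fr_star j) (fr_star i) (fr_star k);
  fr_unit_coef : forall i j : 'I_m.+1, fr_N i j ord0 = (i == fr_star j) :> nat
}.

Definition fusion_matrix m (F : fusion_ring m) (j : 'I_m.+1) : 'M[algC]_m.+1 :=
  \matrix_(k, i) ((fr_N F j i k)%:R).

Definition psd n (A : 'M[algC]_n) : Prop :=
  (map_mx Num.conj A)^T = A /\
  forall v : 'cV[algC]_n, 0 <= ((map_mx Num.conj v)^T *m A *m v) ord0 ord0.

From mathcomp Require Import all_boot all_order all_algebra all_field.
From mathcomp Require Import mxtens.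
Set Implicit Arguments. Unset Strict Implicit. Unset Printing Implicit Defensive.
Import Order.TTheory GRing.Theory Num.Theory.
Local Open Scope ring_scope.

(* Frobenius reciprocity N_{ij}^k = N_{i^* k}^j = N_{k j^*}^i, together with
   associativity, gives sum_j N_{ji}^k N_{jp}^l = sum_q N_{kq}^l N_{iq}^p.
   Hence sum_j M_j (x) M_j = B B^T for the nonnegative integer matrix
   B_{(k,l),q} = N_{kq}^l, and a Gram matrix B B^* is positive semidefinite. *)

Lemma psd_mulmx_adj n p (B : 'M[algC]_(n, p)) :
  psd (B *m (map_mx Num.conj B)^T).
Proof.
have conjK (A : 'M[algC]_(n, p)) : map_mx Num.conj (map_mx Num.conj A) = A.
  by apply/matrixP => i j; rewrite !mxE conjCK.
split; first by rewrite map_mxM -map_trmx conjK trmx_mul trmxK.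
move=> v; set w := (map_mx Num.conj B)^T *m v.
have -> : (map_mx Num.conj v)^T *m (B *m (map_mx Num.conj B)^T) *m v
          = (map_mx Num.conj w)^T *m w.
  by rewrite /w map_mxM -map_trmx conjK trmx_mul trmxK !mulmxA.
rewrite mxE; apply: sumr_ge0 => q _; rewrite !mxE mulrC.
exact: mul_conjC_ge0.
Qed.

Section FusionCoefficients.
Variables (m : nat) (F : fusion_ring m).
Local Notation N := (fr_N F).
Local Notation st := (fr_star F).

Lemma fr_N_rot i j k : N i j (st k) = N j k (st i).
Proof.
have := fr_assoc F i j k ord0.
under eq_bigr => r _ do rewrite fr_unit_coef mulnbr.
under [X in _ = X -> _]eq_bigr => r _ do rewrite fr_unit_coef mulnbr.
have eq_st r : (i == st r) = (r == st i).
  by apply/eqP/eqP => ->; rewrite fr_star_invol.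
under [X in _ = X -> _]eq_bigr => r _ do rewrite eq_st.
by rewrite -!big_mkcond !big_pred1_eq.
Qed.

Lemma fr_N_starl i j k : N (st j) i k = N i (st k) j.
Proof. by rewrite -[in LHS](fr_star_invol F k) fr_N_rot fr_star_invol. Qed.

Lemma fr_N_starl_swap i j k : N (st j) i k = N j k i.
Proof.
by rewrite fr_N_starl fr_star_anti fr_star_invol -fr_N_rot !fr_star_invol.
Qed.

Lemma fr_N_gram i k p l :
  (\sum_(j < m.+1) N j i k * N j p l = \sum_(q < m.+1) N k q l * N i q p)%N.
Proof.
rewrite (reindex_inj (can_inj (fr_star_invol F))) /=.
under eq_bigr => j _ do rewrite fr_N_starl fr_N_starl_swap.
by rewrite fr_assoc; apply: eq_bigr => q _; rewrite fr_N_starl_swap.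
Qed.

Definition fusion_gram : 'M[algC]_(m.+1 * m.+1, m.+1) :=
  \matrix_(a, q) (N (mxtens_unindex a).1 q (mxtens_unindex a).2)%:R.

Lemma conj_fusion_gram : map_mx Num.conj fusion_gram = fusion_gram.
Proof. by apply/matrixP => a q; rewrite !mxE conjC_nat. Qed.

Lemma sum_tensmx_fusion_matrix :
  \sum_(j < m.+1) tensmx (fusion_matrix F j) (fusion_matrix F j)
  = fusion_gram *m fusion_gram^T.
Proof.
apply/matrixP => a b; rewrite summxE !mxE.
under eq_bigr => j _ do rewrite !mxE -natrM.
under [RHS]eq_bigr => q _ do rewrite !mxE -natrM.
by rewrite -!natr_sum fr_N_gram.
Qed.

End FusionCoefficients.

Theorem mainTheorem16 (m : nat) (F : fusion_ring m) :
  psd (\sum_(j < m.+1) tensmx (fusion_matrix F j) (fusion_matrix F j)).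
Proof.
rewrite sum_tensmx_fusion_matrix -[in X in _ *m X^T]conj_fusion_gram.
exact: psd_mulmx_adj.
Qed.
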